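(* Let $X\subset\mathbb{R}^d$ be compact and let $K\colon\mathbb{R}\times\mathbb{R}\to\mathbb{R}$ be a continuous positive definite kernel with $|K(s,t)|\le1$. Let $Z=\mathbb{R}^d\times\mathbb{R}\times\mathbb{R}$, and for $z=(a,b,t)\in Z$ put $\psi_z(x)=K(\langle a,x\rangle+b,t)$. For a finite Borel measure $\rho$ on $Z$ let $K_\rho(x,x')=\int_Z\psi_z(x)\psi_z(x')\,d\rho(z)$. Then for every finite Borel measure $\rho$ on $Z$ and every $\epsilon>0$ there exist $z_1,\dots,z_m\in Z$ and weights $w_1,\dots,w_m\ge0$ such that $$\sup_{x,x'\in X}\Big|K_\rho(x,x')-\sum_{j=1}^m w_j\psi_{z_j}(x)\psi_{z_j}(x')\Big|<\epsilon.$$ *)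

From HB Require Import structures.
From mathcomp Require Import all_boot all_order all_algebra.
From mathcomp Require Import all_classical all_reals all_analysis.
Set Implicit Arguments. Unset Strict Implicit. Unset Printing Implicit Defensive.
Import Order.TTheory GRing.Theory Num.Theory.
Import numFieldNormedType.Exports.
Local Open Scope classical_set_scope.
Local Open Scope ring_scope.

Definition Zspace (R : realType) (d : nat) : Type := ('rV[R]_d * R * R)%type.

Definition ZBorel (R : realType) (d : nat) :=
  g_sigma_algebraType (@open ('rV[R]_d * R * R)%type).

Definition dotv (R : realType) (d : nat) (a x : 'rV[R]_d) : R :=
  \sum_(i < d) a 0 i * x 0 i.

Definition pos_def_kernel (R : realType) (K : R -> R -> R) : Prop :=
  (forall s t, K s t = K t s) /\
  (forall (n : nat) (t : 'I_n -> R) (c : 'I_n -> R),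
     0 <= \sum_(i < n) \sum_(j < n) c i * c j * K (t i) (t j)).

Definition psi (R : realType) (d : nat) (K : R -> R -> R)
  (z : ('rV[R]_d * R * R)%type) (x : 'rV[R]_d) : R :=
  K (dotv z.1.1 x + z.1.2) z.2.

Definition Krho (R : realType) (d : nat) (K : R -> R -> R)
  (rho : {measure set (ZBorel R d) -> \bar R}) (x x' : 'rV[R]_d) : R :=
  Rintegral rho setT (fun z : ZBorel R d => psi K z x * psi K z x').

From HB Require Import structures.
From mathcomp Require Import all_boot all_order all_algebra.
From mathcomp Require Import all_classical all_reals all_analysis.
Import Order.TTheory GRing.Theory Num.Theory.
Import numFieldNormedType.Exports.
Local Open Scope classical_set_scope.
Local Open Scope ring_scope.
From mathcomp Require Import finmap.
From mathcomp Require Import ring lra.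

(* The map (x, z) |-> psi_z(x) is jointly continuous, so, X being compact,
   every parameter z has a neighbourhood on which psi_z' stays uniformly
   r-close to psi_z on X.  A finite measure leaves mass < eps/4 outside some
   compact box of parameters; cover the box by finitely many such
   neighbourhoods around z_1, ..., z_m and refine the cover into disjoint
   measurable cells C_j.  The step function sum_j 1_{C_j}(z) psi_{z_j}(x)
   psi_{z_j}(x') is then within 2r of psi_z(x) psi_z(x') on the box and
   vanishes off it, so integrating against rho gives the estimate with the
   weights w_j = rho(C_j). *)

Lemma ler_distM_norm_le1 {R : numDomainType} (a a' b b' : R) :
  `|a| <= 1 -> `|b'| <= 1 -> `|a * a' - b * b'| <= `|a - b| + `|a' - b'|.
Proof.
move=> a1 b'1; have -> : a * a' - b * b' = a * (a' - b') + (a - b) * b' by ring.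
apply: le_trans (ler_normD _ _) _.
by rewrite !normrM addrC lerD // ?ler_piMr ?ler_piMl.
Qed.

Lemma continuous_fst {U V : topologicalType} : continuous (@fst U V).
Proof. by move=> ?; exact: cvg_fst. Qed.

Lemma continuous_snd {U V : topologicalType} : continuous (@snd U V).
Proof. by move=> ?; exact: cvg_snd. Qed.

Lemma continuous_sum {R : numFieldType} {T : topologicalType} n
    (F : 'I_n -> T -> R) :
  (forall i, continuous (F i)) -> continuous (fun x => \sum_(i < n) F i x).
Proof.
elim: n F => [|n IHn] F cF x.
  by under eq_fun do rewrite big_ord0; exact: cvg_cst.
under eq_fun do rewrite big_ord_recr /=.
by apply: continuousD; [apply: IHn => i; exact: cF | exact: cF].
Qed.

Lemma near_uniform_compact {T U : topologicalType} {R : realType}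
    (f : T * U -> R) (A : set T) (z : U) (eta : R) :
  continuous f -> compact A -> 0 < eta ->
  \forall z' \near z, forall x, A x -> `|f (x, z') - f (x, z)| < eta.
Proof.
move=> cf /compact_near_coveringP cA eta0.
apply: (cA U (nbhs z) (fun z' x => `|f (x, z') - f (x, z)| < eta)) => x Ax.
have eta2 : 0 < eta / 2 by rewrite divr_gt0.
have [[A' B] /= [nA' nB] fAB] := cvgr_dist_lt _ _ (cf (x, z)) _ eta2.
exists (A', B) => // -[x' z'] /= [A'x' Bz'].
have fz' := fAB (x', z') (conj A'x' Bz').
have fz := fAB (x', z) (conj A'x' (nbhs_singleton nB)).
rewrite /= in fz fz'.
apply: le_lt_trans (ler_distD (f (x, z)) _ _) _.
by rewrite (splitr eta) ltrD // distrC.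
Qed.

Lemma compact_finite_interior_cover {T : ptopologicalType} (S : set T)
    (U : T -> set T) :
  compact S -> (forall z, nbhs z (U z)) ->
  exists (m : nat) (u : nat -> T),
    forall z, S z -> exists2 j, (j < m)%N & (U (u j))° z.
Proof.
move=> /[!compact_cover] cS nU.
have [D _ SD] := cS T setT (fun z => (U z)°) (fun z _ => open_interior _)
  (fun z _ => ex_intro2 _ _ z I (nU z)).
exists (size (enum_fset D)), (nth point (enum_fset D)) => z /SD [w Dw Uwz].
by exists (index w (enum_fset D)); rewrite ?index_mem ?nth_index.
Qed.

Section cover_cells.
Context {T : Type} (S : set T) (V : nat -> set T).

Definition cell (j : nat) : set T := (S `&` V j) `\` \bigcup_(i in `I_j) V i.

Context {R : ringType} (c : nat -> R) (m : nat).

Lemma sum_indic_cell_out z : ~ S z -> \sum_(j < m) \1_(cell j) z * c j = 0.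
Proof.
by move=> nSz; rewrite big1 // => j _; rewrite indicE memNset ?mul0r // => -[[]].
Qed.

Lemma sum_indic_cell_in z : S z -> (exists2 j, (j < m)%N & V j z) ->
  exists2 j : 'I_m, V j z & \sum_(i < m) \1_(cell i) z * c i = c j.
Proof.
move=> Sz Vz; have : exists j, (j < m)%N && `[< V j z >].
  by case: Vz => j jm Vjz; exists j; rewrite jm; apply/asboolP.
case/ex_minnP => j /andP[jm /asboolP Vjz] jmin.
have cellE (i : 'I_m) : \1_(cell i) z = (i == Ordinal jm)%:R :> R.
  rewrite indicE; have [->|neq] := eqVneq i (Ordinal jm).
    rewrite mem_set //; split=> // -[k /= kj Vkz].
    by have := jmin k; rewrite (ltn_trans kj jm) asboolT // leqNgt kj => /(_ isT).
  rewrite memNset // => -[[_ Viz] notV].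
  have : nat_of_ord i != j by apply: contra neq => /eqP ij; apply/eqP/val_inj.
  case: ltngtP => // [ij | ji] _; last by apply: notV; exists j.
  by have := jmin i; rewrite ltn_ord asboolT // leqNgt ij => /(_ isT).
exists (Ordinal jm) => //; rewrite (bigD1 (Ordinal jm)) // cellE eqxx mul1r.
rewrite big1 /= ?addr0 // => i /negPf ij; by rewrite cellE ij mul0r.
Qed.

End cover_cells.

Lemma measurable_cell {d} {T : measurableType d} (S : set T) (V : nat -> set T) j :
  measurable S -> (forall i, measurable (V i)) -> measurable (cell S V j).
Proof.
move=> mS mV; apply: measurableD; first exact: measurableI.
by apply: bigcup_measurable => i _.
Qed.

Lemma normr_indic_le1 {T : Type} {R : numDomainType} (A : set T) (z : T) :
  `|\1_A z| <= 1 :> R.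
Proof. by rewrite indicE; case: (_ \in _); rewrite ?normr1 ?normr0. Qed.

Section finite_measure_Rintegral.
Context {d} {T : measurableType d} {R : realType}.
Variable mu : {finite_measure set T -> \bar R}.

Lemma finite_measure_setC_lt (F : nat -> set T) (e : R) :
  (forall n, measurable (F n)) -> {homo F : n m / (n <= m)%N >-> n `<=` m} ->
  \bigcup_n F n = setT -> 0 < e -> exists N, fine (mu (~` F N)) < e.
Proof.
move=> mF F_mono Fcover e0.
have finT : mu setT \is a fin_num := fin_num_measure _ _ measurableT.
have : (mu \o F) n @[n --> \oo] --> (fine (mu setT))%:E.
  rewrite fineK // -Fcover; apply: nondecreasing_cvg_mu => //.
    by rewrite Fcover.
  by move=> n k nk; apply/subsetPset; exact: F_mono.
move=> /fine_cvgP[_ /cvgr_dist_lt/(_ _ e0)[N _ /(_ N (leqnn N)) /= close]].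
exists N; rewrite -setTD measureD // ?ltey_eq ?finT // setTI.
rewrite fineB ?fin_num_measure //.
exact: le_lt_trans (ler_norm _) close.
Qed.

Lemma bounded_integrable (f : T -> R) (M : R) : measurable_fun setT f ->
  (forall z, `|f z| <= M) -> mu.-integrable setT (EFin \o f).
Proof.
move=> mf fM; apply: measurable_bounded_integrable => //.
  by rewrite ltey_eq fin_num_measure.
rewrite /bounded_near; near=> M' => z _ /=; apply: le_trans (fM z) _.
near: M'; exact: nbhs_pinfty_ge (num_real M).
Unshelve. all: by end_near.
Qed.

Lemma Rintegral_sum_indic (C : nat -> set T) (c : nat -> R) m :
  (forall j, measurable (C j)) ->
  Rintegral mu setT (fun z => \sum_(j < m) \1_(C j) z * c j) =
  \sum_(j < m) fine (mu (C j)) * c j.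
Proof.
move=> mC; elim: m => [|m IHm].
  under eq_Rintegral do rewrite big_ord0.
  by rewrite Rintegral_cst // mul0r big_ord0.
have mCc j : measurable_fun setT (fun z => \1_(C j) z * c j).
  apply/measurable_realfun.measurable_funM/measurable_cst.
  exact: measurable_realfun.measurable_indic.
have Cc_le j z : `|\1_(C j) z * c j| <= `|c j|.
  by rewrite normrM ler_piMl ?normr_indic_le1.
under eq_Rintegral do rewrite big_ord_recr /=.
rewrite big_ord_recr /= RintegralD //.
- rewrite IHm RintegralZr //; last exact: integrable_indic.
  by rewrite /Rintegral integral_indic // setIT.
- apply: (bounded_integrable _ (\sum_(j < m) `|c j|)).
    exact: measurable_sum.
  move=> z; apply: le_trans (ler_norm_sum _ _ _) _.
  exact: ler_sum.
- exact: bounded_integrable (Cc_le m).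
Qed.

Lemma dist_Rintegral_le (g h : T -> R) (S : set T) (eta : R) :
  measurable S -> measurable_fun setT g -> measurable_fun setT h -> 0 <= eta ->
  (forall z, `|g z| <= 1) -> (forall z, S z -> `|g z - h z| <= eta) ->
  (forall z, ~ S z -> h z = 0) ->
  `|Rintegral mu setT g - Rintegral mu setT h| <=
    eta * fine (mu setT) + fine (mu (~` S)).
Proof.
move=> mS mg mh eta0 g1 ghS hS.
have mSC : measurable (~` S) by exact: measurableC.
have gh_le z : `|g z - h z| <= eta + \1_(~` S) z.
  rewrite indicE; have [Sz|nSz] := pselect (S z).
    by rewrite memNset ?addr0 ?ghS // => /(_ Sz).
  by rewrite mem_set // hS // subr0 (le_trans (g1 z)) // lerDr.
have gh_le1 z : `|g z - h z| <= eta + 1.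
  rewrite (le_trans (gh_le z)) // lerD2l.
  exact: le_trans (ler_norm _) (normr_indic_le1 _ _).
have h_le z : `|h z| <= 1 + (eta + 1).
  rewrite [h z](_ : _ = g z - (g z - h z)); last by ring.
  by rewrite (le_trans (ler_normB _ _)) // lerD.
have mgh : measurable_fun setT (fun z => g z - h z).
  exact: measurable_realfun.measurable_funB.
have igh := bounded_integrable _ _ mgh gh_le1.
have iagh : mu.-integrable setT (EFin \o (fun z => `|g z - h z|)).
  apply: (bounded_integrable _ (eta + 1)); first exact: measurableT_comp.
  by move=> z; rewrite normr_id.
have ieta : mu.-integrable setT (EFin \o cst eta).
  exact: finite_measure_integrable_cst.
have iSC : mu.-integrable setT (EFin \o \1_(~` S)) by exact: integrable_indic.
have ig := bounded_integrable _ _ mg g1.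
have ih := bounded_integrable _ _ mh h_le.
rewrite -RintegralB //.
apply: le_trans (le_normr_Rintegral _ igh) _ => //.
apply: le_trans (le_Rintegral _ iagh _ (fun z _ => gh_le z)) _ => //.
  exact: (integrableD _ ieta iSC).
by rewrite RintegralD // Rintegral_cst // /Rintegral integral_indic // setIT.
Qed.

Lemma dist_Rintegral_cell_sum_le (S : set T) (V : nat -> set T) (m : nat)
    (u : nat -> T) (g : T -> R) (eta : R) :
  measurable S -> (forall j, measurable (V j)) -> measurable_fun setT g ->
  0 <= eta -> (forall z, `|g z| <= 1) ->
  (forall z, S z -> exists2 j, (j < m)%N & V j z) ->
  (forall j z, V j z -> `|g z - g (u j)| <= eta) ->
  `|Rintegral mu setT g - \sum_(j < m) fine (mu (cell S V j)) * g (u j)| <=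
    eta * fine (mu setT) + fine (mu (~` S)).
Proof.
move=> mS mV mg eta0 g1 Vcover gV.
have mcell j : measurable (cell S V j) by exact: measurable_cell.
rewrite -(Rintegral_sum_indic _ (g \o u)) //.
apply: dist_Rintegral_le => //.
- apply: measurable_sum => j.
  apply/measurable_realfun.measurable_funM/measurable_cst.
  exact: measurable_realfun.measurable_indic.
- move=> z Sz.
  have [j Vjz ->] := sum_indic_cell_in _ _ (g \o u) _ _ Sz (Vcover z Sz).
  exact: gV.
- by move=> z; exact: sum_indic_cell_out.
Qed.

End finite_measure_Rintegral.

Section parameter_space.
Variables (R : realType) (d : nat).
Local Notation Z := ('rV[R]_d * R * R)%type.

Lemma open_measurable_ZBorel (A : set Z) :
  open A -> measurable (A : set (ZBorel R d)).
Proof. exact: sub_sigma_algebra. Qed.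

Lemma continuous_measurable_ZBorel (f : Z -> R) :
  continuous f -> measurable_fun (setT : set (ZBorel R d)) f.
Proof.
move=> /continuousP cf.
apply: (measurability _ (measurable_realfun.RGenOpens.measurableE R)).
move=> _ [_ [a [b ->] <-]]; rewrite setTI; apply: open_measurable_ZBorel.
exact/cf/interval_open.
Qed.

Definition box (N : R) : set Z :=
  [set a : 'rV[R]_d | forall i, `|a ord0 i| <= N] `*`
  [set b | `|b| <= N] `*` [set t | `|t| <= N].

Lemma compact_box N : compact (box N).
Proof.
have segE : [set c : R | `|c| <= N] = `[-N, N]%classic.
  by apply/seteqP; split=> c; rewrite /= in_itv /= ler_norml.
have rowE : [set a : 'rV[R]_d | forall i, `|a ord0 i| <= N] =
    [set a | forall i, `[-N, N]%classic (a ord0 i)].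
  by rewrite -segE.
rewrite /box segE rowE; apply: compact_setX; last exact: segment_compact.
apply: compact_setX; last exact: segment_compact.
apply: (@rV_compact _ _ (fun=> `[-N, N]%classic)) => i; exact: segment_compact.
Qed.

Lemma measurable_box N : measurable (box N : set (ZBorel R d)).
Proof.
rewrite -[box N]setCK; apply: measurableC; apply: open_measurable_ZBorel.
exact: closed_openC (compact_closed (@norm_hausdorff R Z) (compact_box N)).
Qed.

Lemma box_le : {homo box : N M / N <= M >-> N `<=` M}.
Proof.
move=> N M NM [[a b] t] [[/= aN bN] tN]; split; [split|] => /=.
- by move=> i; exact: le_trans (aN i) NM.
- exact: le_trans bN NM.
- exact: le_trans tN NM.
Qed.

Lemma bigcup_box : \bigcup_n box n%:R = setT.
Proof.
apply/seteqP; split => // -[[a b] t] _.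
pose s := \sum_(i < d) `|a ord0 i| + `|b| + `|t|.
have s0 : 0 <= s by rewrite /s !addr_ge0 // sumr_ge0.
exists (Num.Def.archi_bound s) => //.
apply: (box_le _ _ (ltW (archi_boundP s0))).
split; [split|] => /=.
- move=> i; rewrite /s -addrA ler_wpDr ?addr_ge0 //.
  by rewrite (bigD1 i) //= ler_wpDr // sumr_ge0.
- by rewrite /s -addrA ler_wpDl ?sumr_ge0 // lerDl.
- by rewrite /s ler_wpDl // addr_ge0 // sumr_ge0.
Qed.

Lemma finite_measure_box_tight (rho : {finite_measure set (ZBorel R d) -> \bar R})
    (e : R) :
  0 < e -> exists N, fine (rho (~` box N%:R)) < e.
Proof.
apply: (finite_measure_setC_lt rho _ _ (fun n => measurable_box n%:R) _ bigcup_box).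
by move=> n k nk; apply: box_le; rewrite ler_nat.
Qed.

End parameter_space.

Section psi_continuity.
Context {R : realType} {d : nat}.
Local Notation Z := ('rV[R]_d * R * R)%type.

Lemma dotv_continuous : continuous (fun p : 'rV[R]_d * 'rV[R]_d => dotv p.1 p.2).
Proof.
apply: continuous_sum => i p; apply: continuousM.
- apply: (continuous_comp (f := fst) (g := fun M : 'rV[R]_d => M 0 i)).
    exact: continuous_fst.
  exact: coord_continuous.
- apply: (continuous_comp (f := snd) (g := fun M : 'rV[R]_d => M 0 i)).
    exact: continuous_snd.
  exact: coord_continuous.
Qed.

Lemma psi_continuous (K : R -> R -> R) :
  continuous (fun p : R * R => K p.1 p.2) ->
  continuous (fun p : 'rV[R]_d * Z => psi K p.2 p.1).
Proof.
move=> cK p.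
pose W := ('rV[R]_d * Z)%type.
have cx : continuous (fun q : W => q.1) := continuous_fst.
have cz : continuous (fun q : W => q.2) := continuous_snd.
have cab : continuous (fun q : W => q.2.1) :=
  fun q => continuous_comp (cz q) (continuous_fst _).
have ca : continuous (fun q : W => q.2.1.1) :=
  fun q => continuous_comp (cab q) (continuous_fst _).
have cb : continuous (fun q : W => q.2.1.2) :=
  fun q => continuous_comp (cab q) (continuous_snd _).
have ct : continuous (fun q : W => q.2.2) :=
  fun q => continuous_comp (cz q) (continuous_snd _).
have cdot : continuous (fun q : W => dotv q.2.1.1 q.1).
  move=> q; apply: (continuous_comp (f := fun q : W => (q.2.1.1, q.1))
    (g := fun r => dotv r.1 r.2)); last exact: dotv_continuous.
  exact: cvg_pair (ca q) (cx q).
apply: (continuous_comp (f := fun q : W => (dotv q.2.1.1 q.1 + q.2.1.2, q.2.2))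
  (g := fun r : R * R => K r.1 r.2)); last exact: cK.
exact: cvg_pair (cvgD (cdot p) (cb p)) (ct p).
Qed.

Lemma psi_continuous_param (K : R -> R -> R) (x : 'rV[R]_d) :
  continuous (fun p : R * R => K p.1 p.2) -> continuous (fun z : Z => psi K z x).
Proof.
move=> cK z; apply: (continuous_comp (f := fun z : Z => (x, z))
  (g := fun p : 'rV[R]_d * Z => psi K p.2 p.1)); last exact: psi_continuous.
exact: cvg_pair (cvg_cst x) cvg_id.
Qed.
End psi_continuity.

Section psi_tube.
Context {R : realType} {d : nat} (X : set 'rV[R]_d) (K : R -> R -> R).
Local Notation Z := ('rV[R]_d * R * R)%type.
Hypothesis K_continuous : continuous (fun p : R * R => K p.1 p.2).
Hypothesis K_bounded : forall s t, `|K s t| <= 1.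

Definition psi_tube (r : R) (w : Z) : set Z :=
  [set z | forall x, X x -> `|psi K z x - psi K w x| < r].

Lemma psi_tube_finite_cover (S : set Z) (r : R) :
  compact X -> 0 < r -> compact S ->
  exists (m : nat) (u : nat -> Z),
    forall z, S z -> exists2 j, (j < m)%N & (psi_tube r (u j))° z.
Proof.
move=> cX r_gt0 cS.
(* As a normed space, Z carries the pointed topology that compact_cover needs. *)
apply: (@compact_finite_interior_cover (Z : normedModType R) S _ cS) => w.
exact: near_uniform_compact _ _ w _ (psi_continuous _ K_continuous) cX r_gt0.
Qed.

Lemma normr_psi_prod_le1 (x x' : 'rV[R]_d) (z : Z) :
  `|psi K z x * psi K z x'| <= 1.
Proof. by rewrite normrM mulr_ile1 ?K_bounded. Qed.

Lemma psi_tube_prod_dist_le (r : R) (w z : Z) (x x' : 'rV[R]_d) :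
  X x -> X x' -> (psi_tube r w)° z ->
  `|psi K z x * psi K z x' - psi K w x * psi K w x'| <= r *+ 2.
Proof.
move=> Xx Xx' /interior_subset wz; rewrite mulr2n.
apply: le_trans (ler_distM_norm_le1 _ _ _ _ (K_bounded _ _) (K_bounded _ _)) _.
by rewrite lerD // ltW // wz.
Qed.

Lemma measurable_psi_prod (x x' : 'rV[R]_d) :
  measurable_fun (setT : set (ZBorel R d)) (fun z => psi K z x * psi K z x').
Proof.
apply: continuous_measurable_ZBorel => z.
by apply: cvgM; exact: psi_continuous_param.
Qed.

End psi_tube.

Theorem lemma2 (R : realType) (d : nat) (X : set 'rV[R]_d)
  (K : R -> R -> R)
  (hX : compact X)
  (hKc : continuous (fun p : R * R => K p.1 p.2))
  (hKpd : pos_def_kernel K)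
  (hKb : forall s t, `|K s t| <= 1)
  (rho : {finite_measure set (ZBorel R d) -> \bar R})
  (eps : R) (heps : 0 < eps) :
  exists (m : nat) (zs : 'I_m -> ZBorel R d) (w : 'I_m -> R),
    (forall j, 0 <= w j) /\
    exists2 delta : R, delta < eps &
      forall x x', X x -> X x' ->
        `| Krho K rho x x' - \sum_(j < m) w j * psi K (zs j) x * psi K (zs j) x' |
          <= delta.
Proof.
pose mass := fine (rho setT).
have mass_ge0 : 0 <= mass by rewrite fine_ge0 // measure_ge0.
(* The tube radius r makes the error 2 r rho(Z) on the box at most eps/4. *)
pose r := eps / (8 * (mass + 1)).
have r_gt0 : 0 < r by rewrite divr_gt0 // mulr_gt0 // ltr_wpDl.
have [N rho_outside] : exists N, fine (rho (~` box R d N%:R)) < eps / 4.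
  by apply: finite_measure_box_tight; lra.
pose S := box R d N%:R.
have [m [u S_cover]] :=
  psi_tube_finite_cover X K hKc S _ hX r_gt0 (compact_box R d N%:R).
pose V j := (psi_tube X K r (u j))°.
exists m, (fun j : 'I_m => u j), (fun j : 'I_m => fine (rho (cell S V j))).
split=> [j|]; first by rewrite fine_ge0 // measure_ge0.
exists (eps / 2) => [|x x' Xx Xx']; first lra.
under eq_bigr do rewrite -mulrA.
apply: le_trans (dist_Rintegral_cell_sum_le rho S V m u _ (r *+ 2)
  (measurable_box R d N%:R)
  (fun j => open_measurable_ZBorel R d _ (open_interior _))
  (measurable_psi_prod K hKc x x') _ (normr_psi_prod_le1 K hKb x x') S_cover
  (fun j z => psi_tube_prod_dist_le X K hKb r (u j) z x x' Xx Xx')) _.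
  by rewrite mulrn_wge0 // ltW.
have r_mass : r * (8 * (mass + 1)) = eps.
  by rewrite divfK // gt_eqF // mulr_gt0 // ltr_wpDl.
rewrite -/mass mulr2n; nra.
Qed.
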